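(* Let $n>2k$, $k\ge t+3$, and let $\mathcal F\subseteq\binom{[n]}{k}$ be a maximal $t$-intersecting family with $\tau_t(\mathcal F)=t+2$. Suppose there is $T\in\binom{[n]}{t}$ contained in every member of $\mathcal T_t(\mathcal F)$. Then $$|\mathcal T_t(\mathcal F)|\le (k-t)(k-t+1)+1.$$ Moreover, if equality holds, then $\mathcal F\setminus\mathcal F_T=\{G_1,G_2,G_3\}$ with $G_1=A\cup B$, $G_2=A\cup C$, $G_3=(T\cap A)\cup B\cup\{u\}$, where $u\in C$ and $A,B,C$ are pairwise disjoint subsets of $[n]$ with $|A|=t$, $|B|=|C|=k-t$, $|T\cap A|=t-1$ and $T\cap(B\cup C)=\emptyset$.
   Context: A family is $t$-intersecting if any two members meet in at least $t$ elements. A $t$-cover of a family $\mathcal F$ is a set $S\subseteq[n]$ with $|S\cap F|\ge t$ for all $F\in\mathcal F$; $\tau_t(\mathcal F)$ is the minimum size of a $t$-cover, and $\mathcal T_t(\mathcal F)$ denotes the set of all $t$-covers of $\mathcal F$ of size $\tau_t(\mathcal F)$. A $t$-intersecting family $\mathcal F\subseteq\binom{[n]}{k}$ is maximal if no $t$-intersecting subfamily of $\binom{[n]}{k}$ properly contains it. For $A\subseteq[n]$, $\mathcal F_A=\{F\in\mathcal F: A\subseteq F\}$. *)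

(* finite sets over 'I_n model subsets of [n]. *)
From mathcomp Require Import all_boot.
Set Implicit Arguments. Unset Strict Implicit. Unset Printing Implicit Defensive.

Section Families.
Variable n : nat.
Implicit Types (FF GG : {set {set 'I_n}}) (S A : {set 'I_n}).

Definition k_uniform (k : nat) FF : Prop := forall A, A \in FF -> #|A| = k.

Definition t_intersecting (t : nat) FF : Prop :=
  forall A B, A \in FF -> B \in FF -> t <= #|A :&: B|.

Definition is_tcover (t : nat) FF S : bool := [forall A in FF, t <= #|S :&: A|].

(* tau_t(FF): minimum size of a t-cover (n.+1 if there is none) *)
Definition tau_t (t : nat) FF : nat :=
  \big[minn/n.+1]_(S : {set 'I_n} | is_tcover t FF S) #|S|.

Definition TT_t (t : nat) FF : {set {set 'I_n}} :=
  [set S | is_tcover t FF S & #|S| == tau_t t FF].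

Definition maximal_t_intersecting (k t : nat) FF : Prop :=
  [/\ k_uniform k FF, t_intersecting t FF &
      forall GG, FF \proper GG -> k_uniform k GG -> ~ t_intersecting t GG].

Definition fam_at FF A : {set {set 'I_n}} := [set F in FF | A \subset F].

End Families.

From mathcomp Require Import all_boot zify.
Set Implicit Arguments. Unset Strict Implicit. Unset Printing Implicit Defensive.

(* Split each member G of F outside F_T into its trace T :&: G and its outer part G :\: T,
   and each S in T_t(F) into T and the pair S :\: T.  If some G meets T in at most t - 2
   points, every pair lies among the k - t + 2 outer points of G.  Otherwise every trace has
   t - 1 points, so the outer parts form an intersecting (k - t + 1)-uniform family without a
   common point, and every pair meets every outer part.  For such a family with r = k - t + 1,
   two members X1, X2 with the smallest intersection i leave room for at most
   i r + (r - i)^2 <= r (r - 1) + 1 pairs; equality forces i = 1 (for i = r - 1 all pairs lie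
   in X1 :|: X2), and then the family is X1, X2 and (X1 - w) + u. *)

Section FiniteSets.
Variable V : finType.
Implicit Types (Q X Y : {set V}).

Lemma card2_set2 Q x y : #|Q| = 2 -> x \in Q -> y \in Q -> x != y -> Q = [set x; y].
Proof.
move=> cQ xQ yQ xy; apply/eqP; rewrite eq_sym eqEcard cards2 xy cQ leqnn andbT.
by apply/subsetP => z; rewrite !inE => /orP[]/eqP->.
Qed.

Lemma setI_neq0P X Y : X :&: Y != set0 -> exists2 z, z \in X & z \in Y.
Proof. by case/set0Pn => z /setIP[]; exists z. Qed.

Lemma card_bigcup_leq (I : finType) (A : {pred I}) (f : I -> {set V}) :
  #|\bigcup_(i in A) f i| <= \sum_(i in A) #|f i|.
Proof.
elim/big_rec2: _ => [|i s U _ hU]; first by rewrite cards0.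
exact: leq_trans (leq_card_setU _ _) (leq_add (leqnn _) hU).
Qed.

Definition cross_pairs X1 X2 : {set {set V}} :=
  [set [set p.1; p.2] | p in setX (X1 :\: X2) (X2 :\: X1)].

Lemma card_cross_pairs X1 X2 : #|cross_pairs X1 X2| <= #|X1 :\: X2| * #|X2 :\: X1|.
Proof. by rewrite -cardsX; apply: leq_imset_card. Qed.

End FiniteSets.

Lemma bin2_lt r : 3 <= r -> 'C(r.+1, 2) < r * (r - 1) + 1.
Proof.
move=> r_ge3; rewrite bin2 /=.
have := odd_double_half (r.+1 * r); rewrite -muln2.
have : odd (r.+1 * r) <= 1 by case: (odd _).
move: (odd _) (_./2) => o h; nia.
Qed.

Section PairCovers.
Variables (V : finType) (r : nat) (H P : {set {set V}}).
Hypotheses (r_ge3 : 3 <= r) (H_neq0 : H != set0)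
  (H_uniform : forall X, X \in H -> #|X| = r)
  (H_intersecting : forall X Y, X \in H -> Y \in H -> X :&: Y != set0)
  (H_unpinned : forall w, exists2 Y, Y \in H & w \notin Y)
  (P_pairs : forall Q, Q \in P -> #|Q| = 2)
  (P_covers : forall Q X, Q \in P -> X \in H -> Q :&: X != set0).

Lemma pairs_through_sub w Y : Y \in H -> w \notin Y ->
  [set Q in P | w \in Q] \subset [set [set w; y] | y in Y].
Proof.
move=> YH wY; apply/subsetP => Q; rewrite inE => /andP[QP wQ].
have [z zQ zY] := setI_neq0P (P_covers QP YH).
have wz : w != z by apply: contraNneq wY => ->.
by rewrite (card2_set2 (P_pairs QP) wQ zQ wz); apply: imset_f.
Qed.

Lemma card_pairs_through w : #|[set Q in P | w \in Q]| <= r.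
Proof.
have [Y YH wY] := H_unpinned w; rewrite -(H_uniform YH).
exact: leq_trans (subset_leq_card (pairs_through_sub YH wY)) (leq_imset_card _ _).
Qed.

Lemma pairs_avoiding_sub X1 X2 : X1 \in H -> X2 \in H ->
  [set Q in P | Q :&: (X1 :&: X2) == set0] \subset cross_pairs X1 X2.
Proof.
move=> X1H X2H; apply/subsetP => Q; rewrite inE => /andP[QP /eqP Q_X12].
have [x xQ xX1] := setI_neq0P (P_covers QP X1H).
have [y yQ yX2] := setI_neq0P (P_covers QP X2H).
have xX2 : x \notin X2.
  by apply/negP => xX2; move/setP: Q_X12 => /(_ x); rewrite !inE xQ xX1 xX2.
have yX1 : y \notin X1.
  by apply/negP => yX1; move/setP: Q_X12 => /(_ y); rewrite !inE yQ yX1 yX2.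
have xy : x != y by apply: contraNneq xX2 => ->.
rewrite (card2_set2 (P_pairs QP) xQ yQ xy).
by apply/imsetP; exists (x, y); rewrite // !inE xX1 xX2 yX1 yX2.
Qed.

Lemma card_pairs_meeting X1 X2 :
  #|[set Q in P | Q :&: (X1 :&: X2) != set0]| <= #|X1 :&: X2| * r.
Proof.
apply: (@leq_trans #|\bigcup_(w in X1 :&: X2) [set Q in P | w \in Q]|).
  apply/subset_leq_card/subsetP => Q; rewrite inE => /andP[QP].
  case/set0Pn => w /setIP[wQ wX12].
  by apply/bigcupP; exists w; rewrite // inE QP.
apply: leq_trans (card_bigcup_leq _ _) _.
by rewrite -sum_nat_const; apply: leq_sum => w _; apply: card_pairs_through.
Qed.

Lemma card_pairs_split X1 X2 :
  #|P| <= #|[set Q in P | Q :&: (X1 :&: X2) != set0]| +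
          #|[set Q in P | Q :&: (X1 :&: X2) == set0]|.
Proof.
rewrite -(cardsID [set Q | Q :&: (X1 :&: X2) != set0] P).
by apply: leq_add; apply/subset_leq_card/subsetP => Q; rewrite !inE ?negbK => /andP[-> ->].
Qed.

Lemma card_setD_member X1 X2 : X1 \in H -> X2 \in H -> #|X1 :\: X2| = r - #|X1 :&: X2|.
Proof. by move=> X1H X2H; rewrite cardsD H_uniform. Qed.

(* Pairs meeting X1 :&: X2 go through one of its points, at most r per point; the others
   join X1 :\: X2 to X2 :\: X1. *)
Lemma card_pairs_le X1 X2 : X1 \in H -> X2 \in H ->
  #|P| <= #|X1 :&: X2| * r + (r - #|X1 :&: X2|) * (r - #|X1 :&: X2|).
Proof.
move=> X1H X2H; apply: leq_trans (card_pairs_split X1 X2) (leq_add _ _).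
  exact: card_pairs_meeting.
apply: leq_trans (subset_leq_card (pairs_avoiding_sub X1H X2H)) _.
apply: leq_trans (card_cross_pairs _ _) _.
by rewrite !card_setD_member // setIC.
Qed.

Lemma card_setI_range X1 X2 : X1 \in H -> X2 \in H -> X1 != X2 -> 0 < #|X1 :&: X2| < r.
Proof.
move=> X1H X2H X12; rewrite card_gt0 H_intersecting //= ltn_neqAle.
rewrite -(H_uniform X1H) subset_leq_card ?subsetIl // andbT.
apply: contra X12 => /eqP cI.
have X1_sub : X1 \subset X2 by apply/setIidPl/eqP; rewrite eqEcard subsetIl cI /=.
by rewrite eqEcard X1_sub (H_uniform X1H) (H_uniform X2H) leqnn.
Qed.

Lemma member_eq_of_sub X Y : X \in H -> Y \in H -> X \subset Y -> X = Y.
Proof.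
by move=> XH YH XY; apply/eqP; rewrite eqEcard XY (H_uniform XH) (H_uniform YH) leqnn.
Qed.

Definition min_meeting_pair X1 X2 := [/\ X1 \in H, X2 \in H, X1 != X2 &
  forall Y1 Y2, Y1 \in H -> Y2 \in H -> Y1 != Y2 -> #|X1 :&: X2| <= #|Y1 :&: Y2|].

Lemma exists_min_meeting_pair : exists X1 X2, min_meeting_pair X1 X2.
Proof.
have [X0 X0H] := set0Pn _ H_neq0.
have [x xX0] : exists x, x \in X0 by apply/card_gt0P; rewrite H_uniform //; lia.
have [Y YH xY] := H_unpinned x.
pose D (p : {set V} * {set V}) := [&& p.1 \in H, p.2 \in H & p.1 != p.2].
have D0 : D (X0, Y) by rewrite /D /= X0H YH; apply: contraNneq xY => <-.
case: (arg_minnP (fun p => #|p.1 :&: p.2|) D0) => -[X1 X2] /and3P[X1H X2H X12] min.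
exists X1, X2; split=> // Y1 Y2 Y1H Y2H Y12.
by apply: (min (Y1, Y2)); rewrite /D /= Y1H Y2H.
Qed.

(* A member avoiding a point w of the intersection meets each of X1, X2 in at least r - 1
   points, but their intersection in at most r - 2; this leaves no room outside X1 :|: X2. *)
Lemma min_meeting_pair_union X1 X2 Y w z : min_meeting_pair X1 X2 ->
  #|X1 :&: X2| = r - 1 -> Y \in H -> w \in X1 :&: X2 -> w \notin Y -> z \in Y ->
  z \in X1 :|: X2.
Proof.
case=> X1H X2H _ min cI YH wI wY zY; apply/negPn/negP => zU.
have /setIP[wX1 wX2] := wI.
have X1Y : X1 != Y by apply: contraNneq wY => <-.
have X2Y : X2 != Y by apply: contraNneq wY => <-.
have m1 := min _ _ X1H YH X1Y; have m2 := min _ _ X2H YH X2Y.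
have sU : (X1 :&: Y) :|: (X2 :&: Y) \subset Y :\ z.
  apply/subsetP => x; rewrite !inE => /orP[] /andP[xX xY]; rewrite xY andbT;
  by apply: contraNneq zU => <-; rewrite !inE xX ?orbT.
have sI : (X1 :&: Y) :&: (X2 :&: Y) \subset (X1 :&: X2) :\ w.
  apply/subsetP => x; rewrite !inE => /andP[/andP[xX1 xY] /andP[xX2 _]].
  by rewrite xX1 xX2 !andbT; apply: contraNneq wY => <-.
have le_sum : #|X1 :&: Y| + #|X2 :&: Y| <= #|Y :\ z| + #|(X1 :&: X2) :\ w|.
  by rewrite -cardsUI leq_add // subset_leq_card.
have := cardsD1 z Y; have := cardsD1 w (X1 :&: X2).
rewrite zY wI (H_uniform YH) cI; move: m1 m2 le_sum; rewrite cI.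
move: #|X1 :&: Y| #|X2 :&: Y| #|Y :\ z| #|X1 :&: X2 :\ w| => a b c d; clear; lia.
Qed.

Lemma pairs_sub_min_meeting_union X1 X2 Q : min_meeting_pair X1 X2 ->
  #|X1 :&: X2| = r - 1 -> Q \in P -> Q \subset X1 :|: X2.
Proof.
move=> mp cI QP; have [X1H X2H _ _] := mp.
have [Q_X12 | /set0Pn[w /setIP[wQ wI]]] := eqVneq (Q :&: (X1 :&: X2)) set0.
  have : Q \in cross_pairs X1 X2.
    by apply: (subsetP (pairs_avoiding_sub X1H X2H)); rewrite inE QP Q_X12 eqxx.
  case/imsetP => -[x y]; rewrite !inE /= => /andP[/andP[_ xX1] /andP[_ yX2]] ->.
  by apply/subsetP => z; rewrite !inE => /orP[]/eqP->; rewrite ?xX1 ?yX2 ?orbT.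
have [Y YH wY] := H_unpinned w; have [z zQ zY] := setI_neq0P (P_covers QP YH).
have wz : w != z by apply: contraNneq wY => ->.
rewrite (card2_set2 (P_pairs QP) wQ zQ wz) subUset !sub1set.
rewrite (min_meeting_pair_union mp cI YH wI wY zY) andbT.
by move: wI; rewrite !inE => /andP[->].
Qed.

Lemma card_pairs_lt_min_meeting_near X1 X2 : min_meeting_pair X1 X2 ->
  #|X1 :&: X2| = r - 1 -> #|P| < r * (r - 1) + 1.
Proof.
move=> mp cI; have [X1H X2H _ _] := mp.
have cU : #|X1 :|: X2| = r.+1 by rewrite cardsU (H_uniform X1H) (H_uniform X2H) cI; lia.
have sub : P \subset [set Q : {set V} | Q \subset X1 :|: X2 & #|Q| == 2].
  by apply/subsetP => Q QP; rewrite inE (pairs_sub_min_meeting_union mp) // P_pairs.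
apply: leq_ltn_trans (subset_leq_card sub) _.
by rewrite cards_draws cU; apply: bin2_lt.
Qed.

Section TightPair.
Variables (X1 X2 Y : {set V}) (w : V).
Hypotheses (X1H : X1 \in H) (X2H : X2 \in H) (YH : Y \in H) (wY : w \notin Y)
  (X12 : X1 :&: X2 = [set w]) (P_tight : #|P| = r * (r - 1) + 1).

(* Every inequality in card_pairs_le is an equality when i = 1. *)
Lemma tight_pair_classes :
  [set Q in P | w \in Q] = [set [set w; y] | y in Y] /\
  [set Q in P | Q :&: (X1 :&: X2) == set0] = cross_pairs X1 X2.
Proof.
have split := card_pairs_split X1 X2.
have eM : [set Q in P | Q :&: (X1 :&: X2) != set0] = [set Q in P | w \in Q].
  by apply/setP => Q; rewrite !inE X12 setI_eq0 disjoint_sym disjoints1 negbK.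
rewrite eM P_tight in split.
have sW := pairs_through_sub YH wY; have sC := pairs_avoiding_sub X1H X2H.
have cW : #|[set [set w; y] | y in Y]| <= r by rewrite -(H_uniform YH) leq_imset_card.
have cC := card_cross_pairs X1 X2.
rewrite !card_setD_member // (setIC X2 X1) X12 cards1 in cC.
have e : r * (r - 1) + 1 = r + (r - 1) * (r - 1) by clear -r_ge3; nia.
have leW := subset_leq_card sW; have leC := subset_leq_card sC; rewrite e in split.
have [geW geC] : #|[set [set w; y] | y in Y]| <= #|[set Q in P | w \in Q]| /\
    #|cross_pairs X1 X2| <= #|[set Q in P | Q :&: (X1 :&: X2) == set0]|.
  move: split cW cC leW leC; move: #|[set Q in P | w \in Q]| #|[set Q in P | _ == set0]|.
  move: #|[set [set w; y] | y in Y]| #|cross_pairs X1 X2| ((r - 1) * (r - 1)).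
  by move=> a b c d s; clear; lia.
by split; apply/eqP; rewrite eqEcard ?sW ?sC.
Qed.

Lemma tight_pairs_through y : y \in Y -> [set w; y] \in P.
Proof.
move=> yY; have : [set w; y] \in [set Q in P | w \in Q].
  by rewrite (tight_pair_classes.1); apply: (imset_f (fun y => [set w; y])).
by rewrite inE => /andP[].
Qed.

Lemma tight_cross_pairs x y : x \in X1 :\: X2 -> y \in X2 :\: X1 -> [set x; y] \in P.
Proof.
move=> xD yD; have : [set x; y] \in [set Q in P | Q :&: (X1 :&: X2) == set0].
  by rewrite (tight_pair_classes.2); apply/imsetP; exists (x, y); rewrite // inE xD yD.
by rewrite inE => /andP[].
Qed.

Lemma tight_cross_sub X : X \in H -> (X1 :\: X2 \subset X) || (X2 :\: X1 \subset X).
Proof.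
move=> XH; apply/negPn/negP; rewrite negb_or => /andP[/subsetPn[x xD xX] /subsetPn[y yD yX]].
have [v] := setI_neq0P (P_covers (tight_cross_pairs xD yD) XH).
by rewrite !inE => /orP[] /eqP ->; apply/negP.
Qed.

Lemma tight_members X : X \in H -> [\/ X = X1, X = X2 | X = Y].
Proof.
move=> XH; have [wX | wX] := boolP (w \in X); last first.
  apply: Or33; apply/esym/member_eq_of_sub => //; apply/subsetP => y yY.
  have [v] := setI_neq0P (P_covers (tight_pairs_through yY) XH).
  by rewrite !inE => /orP[] /eqP ->; rewrite ?(negbTE wX).
have sub_of_cross Xa Xb : Xa :&: Xb = [set w] -> Xa :\: Xb \subset X -> Xa \subset X.
  move=> Xab sD; apply/subsetP => x xXa; have [xXb | xXb] := boolP (x \in Xb).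
    have : x \in Xa :&: Xb by rewrite inE xXa xXb.
    by rewrite Xab inE => /eqP ->.
  by apply: (subsetP sD); rewrite inE xXa xXb.
case/orP: (tight_cross_sub XH) => sD.
  by apply: Or31; apply/esym/member_eq_of_sub => //; apply: sub_of_cross X12 sD.
apply: Or32; apply/esym/member_eq_of_sub => //.
by apply: (sub_of_cross X2 X1) sD; rewrite setIC.
Qed.

End TightPair.

Lemma third_member_shape X1 X2 Y w : X1 \in H -> X2 \in H -> Y \in H ->
  X1 :&: X2 = [set w] -> w \notin Y -> X1 :\: X2 \subset Y ->
  (forall X, X \in H -> [\/ X = X1, X = X2 | X = Y]) ->
  exists u, [/\ u \in X2, u != w & H = [set X1; X2; X1 :\ w :|: [set u]]].
Proof.
move=> X1H X2H YH X12 wY sD members.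
have [v vY vX2] := setI_neq0P (H_intersecting YH X2H).
have vw : v != w by apply: contraNneq wY => <-.
have wX1 : w \in X1 by have := set11 w; rewrite -X12 => /setIP[].
have vX1 : v \notin X1 by apply: contra vw => vX1; rewrite -in_set1 -X12 inE vX1.
have eD : X1 :\: X2 = X1 :\ w.
  apply/setP => x; rewrite !inE -in_set1 -X12 inE.
  by case: (x \in X1); rewrite ?andbF ?andbT.
have cD : #|X1 :\ w| = r - 1.
  by rewrite -(H_uniform X1H) (cardsD1 w X1) wX1 add1n subn1.
have eY : Y = X1 :\ w :|: [set v].
  apply/eqP; rewrite eq_sym eqEcard subUset sub1set vY -eD sD /=.
  by rewrite setUC eD cardsU1 !inE (negbTE vX1) andbF cD (H_uniform YH) add1n subn1 leqSpred.
exists v; split => //; apply/setP => X; rewrite !inE -eY; apply/idP/idP.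
  by move/members => [] ->; rewrite eqxx ?orbT.
by case/orP => [/orP[]|] /eqP ->.
Qed.

Theorem card_pair_covers_le : #|P| <= r * (r - 1) + 1.
Proof.
have [X1 [X2 [X1H X2H X12 _]]] := exists_min_meeting_pair.
have /andP[i_gt0 i_lt] := card_setI_range X1H X2H X12.
have := card_pairs_le X1H X2H; move: #|X1 :&: X2| i_gt0 i_lt => i; nia.
Qed.

(* For the closest pair, i * r + (r - i)^2 reaches r * (r - 1) + 1 only at i = 1 and
   i = r - 1, and the latter is excluded. *)
Theorem pair_covers_extremal : #|P| = r * (r - 1) + 1 ->
  exists X1 X2 w u,
    [/\ X1 :&: X2 = [set w], u \in X2, u != w & H = [set X1; X2; X1 :\ w :|: [set u]]].
Proof.
move=> P_tight; have [X1 [X2 mp]] := exists_min_meeting_pair; have [X1H X2H X12 _] := mp.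
have /andP[i_gt0 i_lt] := card_setI_range X1H X2H X12.
have [i_gt1 | i_le1] := ltnP 1 #|X1 :&: X2|.
  have i_eq : #|X1 :&: X2| = r - 1.
    by have := card_pairs_le X1H X2H; rewrite P_tight; move: #|X1 :&: X2| i_gt1 i_lt => i; nia.
  by have := card_pairs_lt_min_meeting_near mp i_eq; rewrite P_tight ltnn.
have /cards1P[w X12w] : #|X1 :&: X2| == 1 by rewrite eqn_leq i_le1.
have [Y YH wY] := H_unpinned w.
case/orP: (tight_cross_sub X1H X2H YH wY X12w P_tight YH) => sD.
  have [u [uX2 uw eH]] := third_member_shape X1H X2H YH X12w wY sD
    (tight_members X1H X2H YH wY X12w P_tight).
  by exists X1, X2, w, u.
have X21w : X2 :&: X1 = [set w] by rewrite setIC.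
have [u [uX1 uw eH]] := third_member_shape X2H X1H YH X21w wY sD
  (tight_members X2H X1H YH wY X21w P_tight).
by exists X2, X1, w, u.
Qed.

End PairCovers.

Lemma three_set_family_shape (V : finType) (T T0 X1 X2 : {set V}) (w u : V) (t m : nat) :
  0 < t -> T0 \subset T -> #|T0| = t.-1 -> [disjoint T & X1 :|: X2] ->
  #|X1| = m.+1 -> #|X2| = m.+1 -> X1 :&: X2 = [set w] -> u \in X2 -> u != w ->
  exists A B C : {set V},
    [/\ [disjoint A & B], [disjoint A & C] & [disjoint B & C]] /\
    [/\ #|A| = t, #|B| = m, #|C| = m & #|T :&: A| = t.-1] /\
    [/\ T :&: (B :|: C) = set0, u \in C &
        [set T0 :|: X | X in [set X1; X2; X1 :\ w :|: [set u]]] =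
        [set A :|: B; A :|: C; (T :&: A) :|: B :|: [set u]]].
Proof.
move=> t_gt0 T0_sub cT0 T_X cX1 cX2 X12 uX2 uw.
have /setIP[wX1 wX2] : w \in X1 :&: X2 by rewrite X12 set11.
have notT x : x \in T -> (x \in X1) = false /\ (x \in X2) = false.
  by move=> xT; move: (disjointFr T_X xT); rewrite inE => /norP[/negbTE-> /negbTE->].
have notT0 x : x \in T0 -> (x \in X1) = false /\ (x \in X2) = false.
  by move=> /(subsetP T0_sub); apply: notT.
have wT0 : w \notin T0 by apply/negP => /notT0[]; rewrite wX1.
have wT : w \notin T by apply/negP => /notT[]; rewrite wX1.
have meet x : x \in X1 -> x \in X2 -> x = w.
  by move=> xX1 xX2; apply/set1P; rewrite -X12 inE xX1 xX2.
have TA : T :&: (w |: T0) = T0.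
  apply/setP => x; rewrite !inE; case: (eqVneq x w) => [->|_] /=.
    by rewrite (negbTE wT) (negbTE wT0).
  by case xT0: (x \in T0); rewrite ?andbF // (subsetP T0_sub).
have cD (X : {set V}) : w \in X -> #|X| = m.+1 -> #|X :\ w| = m.
  by move=> wX cX; have := cardsD1 w X; rewrite wX cX add1n => -[].
exists (w |: T0), (X1 :\ w), (X2 :\ w); split; [|split].
- split; rewrite -setI_eq0; apply/eqP/setP => x; rewrite !inE; apply/negbTE/negP.
  + by case/andP => /orP[/eqP-> | /notT0[-> _]]; rewrite ?eqxx ?andbF.
  + by case/andP => /orP[/eqP-> | /notT0[_ ->]]; rewrite ?eqxx ?andbF.
  + by case/andP => /andP[xw xX1] /andP[_ xX2]; move: xw; rewrite (meet x) ?eqxx.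
- by rewrite cardsU1 wT0 cT0 (cD X1) // (cD X2) // TA cT0 add1n prednK.
- split.
  + apply/setP => x; rewrite !inE; case xT: (x \in T) => //=.
    by have [-> ->] := notT x xT; rewrite !andbF.
  + by rewrite !inE uX2 uw.
  have glue (X : {set V}) : w \in X -> w |: T0 :|: X :\ w = T0 :|: X.
    by move=> wX; rewrite -setUA setUCA setD1K.
  by rewrite !imsetU !imset_set1 TA !glue // setUA.
Qed.

Lemma bigminn_le (I : eqType) (s : seq I) (P : pred I) (f : I -> nat) m x :
  x \in s -> P x -> \big[minn/m]_(i <- s | P i) f i <= f x.
Proof.
elim: s => //= y s IH; rewrite inE big_cons => /orP[/eqP <- -> | xs Px].
  exact: geq_minl.
case: (P y); last exact: IH.
exact: leq_trans (geq_minr _ _) (IH xs Px).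
Qed.

Section Reduction.
Variables (n k t : nat) (F : {set {set 'I_n}}) (T : {set 'I_n}).
Hypotheses (k_ge : t + 3 <= k) (F_uniform : k_uniform k F)
  (F_intersecting : t_intersecting t F) (tau_F : tau_t t F = t + 2)
  (card_T : #|T| = t) (T_sub_TT : forall S, S \in TT_t t F -> T \subset S).
Implicit Types (G S : {set 'I_n}).

Let F' := F :\: fam_at F T.

Lemma mem_F' G : (G \in F') = (G \in F) && ~~ (T \subset G).
Proof. by rewrite !inE; case: (G \in F); rewrite ?andbF ?andbT. Qed.

Lemma tcover_card_ge S : is_tcover t F S -> t + 2 <= #|S|.
Proof. by move=> cS; rewrite -tau_F; apply: bigminn_le; rewrite ?mem_index_enum. Qed.

Lemma TT_meet S G : S \in TT_t t F -> G \in F -> t <= #|S :&: G|.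
Proof. by rewrite inE => /andP[/forallP cS _] GF; have := cS G; rewrite GF. Qed.

Lemma card_TT S : S \in TT_t t F -> #|S| = t + 2.
Proof. by rewrite inE => /andP[_ /eqP ->]. Qed.

Lemma small_not_tcover S : #|S| <= t + 1 -> exists2 G, G \in F & #|S :&: G| < t.
Proof.
move=> cS; have [cov | /forallPn[G]] := boolP (is_tcover t F S).
  by have := tcover_card_ge cov; lia.
by rewrite negb_imply -ltnNge => /andP[GF lt]; exists G.
Qed.

Lemma card_trace_lt G : G \in F' -> #|T :&: G| < t.
Proof.
rewrite mem_F' -card_T => /andP[_ TG]; rewrite ltn_neqAle subset_leq_card ?subsetIl // andbT.
by apply: contra TG => cI; apply/setIidPl/eqP; rewrite eqEcard subsetIl (eqP cI) /=.
Qed.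

Lemma card_TT_setD S : S \in TT_t t F -> #|S :\: T| = 2.
Proof. by move=> ST; rewrite cardsD (setIidPr (T_sub_TT ST)) card_TT // card_T; lia. Qed.

Lemma card_setD_TT : #|[set S :\: T | S in TT_t t F]| = #|TT_t t F|.
Proof.
apply: card_in_imset => S1 S2 S1T S2T e.
by rewrite -(setID S1 T) -(setID S2 T) e (setIidPr (T_sub_TT S1T)) (setIidPr (T_sub_TT S2T)).
Qed.

Lemma card_meet_le_trace S G : S \in TT_t t F ->
  #|S :&: G| <= #|T :&: G| + #|(S :\: T) :&: G|.
Proof.
move=> ST; rewrite -cardsUI; apply/leq_trans/leq_addr/subset_leq_card/subsetP => x.
by rewrite !inE => /andP[xS ->]; case: (x \in T); rewrite ?xS.
Qed.

Lemma TT_setD_sub S G : S \in TT_t t F -> G \in F -> #|T :&: G| + 2 <= t -> S :\: T \subset G.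
Proof.
move=> ST GF far; apply/setIidPl/eqP; rewrite eqEcard subsetIl card_TT_setD //=.
have := leq_trans far (leq_trans (TT_meet ST GF) (card_meet_le_trace G ST)).
by rewrite leq_add2l.
Qed.

(* A member far from T confines every pair S :\: T to its k - t + 2 points outside T. *)
Lemma card_TT_lt_far G : G \in F -> #|T :&: G| + 2 <= t ->
  #|TT_t t F| < (k - t + 1) * (k - t + 1 - 1) + 1.
Proof.
move=> GF far; have [-> | [S0 S0T]] := set_0Vmem (TT_t t F); first by rewrite cards0 addn1.
have near : t <= #|T :&: G| + 2.
  apply: leq_trans (TT_meet S0T GF) (leq_trans (card_meet_le_trace G S0T) _).
  by rewrite leq_add2l -(card_TT_setD S0T) subset_leq_card ?subsetIl.
rewrite -card_setD_TT.
have sub : [set S :\: T | S in TT_t t F] \subset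
           [set Q : {set 'I_n} | Q \subset G :\: T & #|Q| == 2].
  apply/subsetP => _ /imsetP[S ST ->]; rewrite inE card_TT_setD // eqxx andbT.
  by have := setSD T (TT_setD_sub ST GF far); rewrite setDDl setUid.
have cG : #|G :\: T| <= (k - t + 1).+1.
  by rewrite cardsD setIC (F_uniform GF); move: #|T :&: G| near => i; lia.
apply: leq_ltn_trans (subset_leq_card sub) _; rewrite cards_draws.
by apply: leq_ltn_trans (leq_bin2l _ cG) (bin2_lt _); lia.
Qed.

Lemma exists_trace_lt : exists2 G, G \in F & #|T :&: G| < t.
Proof. by apply: small_not_tcover; rewrite card_T addn1. Qed.

Lemma F'_sub G : G \in F' -> G \in F.
Proof. by rewrite mem_F' => /andP[]. Qed.

Lemma t_gt0 : 0 < t.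
Proof. by have [G _ lt] := exists_trace_lt; apply: leq_ltn_trans lt. Qed.

Lemma F'_neq0 : F' != set0.
Proof.
have [G GF lt] := exists_trace_lt.
apply/set0Pn; exists G; rewrite mem_F' GF /=; apply: contraTN lt => TG.
by rewrite -leqNgt (setIidPl TG) card_T.
Qed.

Section LargeTrace.
Hypothesis trace_large : forall G, G \in F' -> t.-1 <= #|T :&: G|.

Lemma card_trace G : G \in F' -> #|T :&: G| = t.-1.
Proof.
move=> GF; apply/eqP; rewrite eqn_leq trace_large // andbT.
by rewrite -ltnS prednK ?t_gt0 // card_trace_lt.
Qed.

Lemma card_setD_trace G : G \in F' -> #|G :\: T| = k - t + 1.
Proof.
move=> GF; rewrite cardsD setIC card_trace // (F_uniform (F'_sub GF)).
by move: t_gt0 k_ge; clear; lia.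
Qed.

Lemma card_meet_split G1 G2 : G1 \in F' -> G2 \in F' ->
  t <= #|T :&: (G1 :&: G2)| + #|(G1 :\: T) :&: (G2 :\: T)|.
Proof.
move=> G1F G2F; rewrite -setDIl setIC cardsID.
exact: F_intersecting (F'_sub G1F) (F'_sub G2F).
Qed.

(* Two members whose parts outside T share at most one point already meet in t - 1 points
   of T, which is all of their traces. *)
Lemma trace_eq G1 G2 : G1 \in F' -> G2 \in F' ->
  #|(G1 :\: T) :&: (G2 :\: T)| <= 1 -> T :&: G1 = T :&: G2.
Proof.
move=> G1F G2F le1.
have ge : t.-1 <= #|T :&: (G1 :&: G2)|.
  by move: (card_meet_split G1F G2F) le1; move: #|_ :&: (_ :&: _)| #|_ :&: (_ :\: _)| => a b; lia.
have trace_of G : G \in F' -> T :&: (G1 :&: G2) \subset T :&: G -> T :&: (G1 :&: G2) = T :&: G.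
  by move=> GF sub; apply/eqP; rewrite eqEcard sub card_trace.
have e1 : T :&: (G1 :&: G2) = T :&: G1 by apply: trace_of; rewrite // setIA subsetIl.
have e2 : T :&: (G1 :&: G2) = T :&: G2 by apply: trace_of; rewrite // setICA subsetIr.
by rewrite -e1 -e2.
Qed.

Let H := [set G :\: T | G in F'].
Let P := [set S :\: T | S in TT_t t F].

Lemma outer_neq0 : H != set0.
Proof. by have /set0Pn[G GF] := F'_neq0; apply/set0Pn; exists (G :\: T); apply: imset_f. Qed.

Lemma outer_uniform X : X \in H -> #|X| = k - t + 1.
Proof. by case/imsetP => G GF ->; apply: card_setD_trace. Qed.

Lemma outer_intersecting X Y : X \in H -> Y \in H -> X :&: Y != set0.
Proof.
case/imsetP => G1 G1F ->; case/imsetP => G2 G2F ->.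
have : #|T :&: (G1 :&: G2)| <= t.-1.
  by rewrite -(card_trace G1F) subset_leq_card // setIA subsetIl.
rewrite -card_gt0; move: (card_meet_split G1F G2F) t_gt0.
by move: #|_ :&: (_ :&: _)| #|_ :&: (_ :\: _)| => a b; lia.
Qed.

Lemma outer_unpinned w : exists2 Y, Y \in H & w \notin Y.
Proof.
have [G GF lt] : exists2 G, G \in F & #|(w |: T) :&: G| < t.
  by apply: small_not_tcover; rewrite cardsU1 card_T addnC leq_add2l leq_b1.
have GF' : G \in F'.
  rewrite mem_F' GF /=; apply: contraTN lt => TG; rewrite -leqNgt -card_T.
  by apply/subset_leq_card/subsetP => x xT; rewrite !inE xT (subsetP TG) ?orbT.
exists (G :\: T); first exact: imset_f.
rewrite inE negb_and negbK; have [//|wT /=] := boolP (w \in T).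
apply: contraTN lt => wG; rewrite -leqNgt.
have sub : w |: (T :&: G) \subset (w |: T) :&: G.
  by apply/subsetP => x; rewrite !inE => /orP[/eqP -> | /andP[-> ->]]; rewrite ?eqxx ?wG ?orbT.
apply: leq_trans (subset_leq_card sub).
by rewrite cardsU1 inE (negbTE wT) card_trace // add1n prednK ?t_gt0.
Qed.

Lemma pairs_TT Q : Q \in P -> #|Q| = 2.
Proof. by case/imsetP => S ST ->; apply: card_TT_setD. Qed.

Lemma pairs_TT_cover Q X : Q \in P -> X \in H -> Q :&: X != set0.
Proof.
case/imsetP => S ST ->; case/imsetP => G GF ->.
have -> : (S :\: T) :&: (G :\: T) = (S :\: T) :&: G.
  by apply/setP => x; rewrite !inE; case: (x \in T).
move: (leq_trans (TT_meet ST (F'_sub GF)) (card_meet_le_trace G ST)).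
by rewrite card_trace // -{1}(prednK t_gt0) -addn1 leq_add2l card_gt0.
Qed.

Lemma outer_size_ge3 : 3 <= k - t + 1.
Proof. by move: k_ge; clear; lia. Qed.

Lemma card_TT_le_trace_large : #|TT_t t F| <= (k - t + 1) * (k - t + 1 - 1) + 1.
Proof.
rewrite -card_setD_TT.
exact: card_pair_covers_le outer_size_ge3 outer_neq0 outer_uniform outer_intersecting
  outer_unpinned pairs_TT pairs_TT_cover.
Qed.

Lemma F'_eq_imset T0 : (forall G, G \in F' -> T :&: G = T0) -> F' = [set T0 :|: X | X in H].
Proof.
move=> trace; apply/setP => G; apply/idP/imsetP => [GF | [_ /imsetP[G' G'F ->] ->]].
  by exists (G :\: T); [apply: imset_f | rewrite -(trace G GF) setIC setID].
by rewrite -(trace G' G'F) setIC setID.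
Qed.

Lemma trace_constant X1 X2 X3 : H = [set X1; X2; X3] ->
  #|X1 :&: X2| <= 1 -> #|X3 :&: X2| <= 1 -> exists T0, forall G, G \in F' -> T :&: G = T0.
Proof.
move=> eH le12 le32.
have inH X : X \in [set X1; X2; X3] -> exists2 G, G \in F' & X = G :\: T.
  by rewrite -eH => /imsetP.
have [G1 G1F eX1] : exists2 G, G \in F' & X1 = G :\: T by apply: inH; rewrite !inE eqxx.
have [G2 G2F eX2] : exists2 G, G \in F' & X2 = G :\: T by apply: inH; rewrite !inE eqxx orbT.
exists (T :&: G2) => G GF.
have : G :\: T \in [set X1; X2; X3] by rewrite -eH; apply: imset_f.
rewrite !inE => /orP[/orP[]|] /eqP eG; try by apply: trace_eq; rewrite // eG -eX2.
have e1 : T :&: G = T :&: G1 by apply: trace_eq; rewrite // eG -eX1 setIC.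
by rewrite e1; apply: trace_eq; rewrite // -eX1 -eX2.
Qed.

Lemma TT_extremal_trace_large :
  #|TT_t t F| = (k - t + 1) * (k - t + 1 - 1) + 1 ->
  exists (A B C : {set 'I_n}) (u : 'I_n),
    [/\ [disjoint A & B], [disjoint A & C] & [disjoint B & C]] /\
    [/\ #|A| = t, #|B| = k - t, #|C| = k - t & #|T :&: A| = t.-1] /\
    [/\ T :&: (B :|: C) = set0, u \in C &
        F' = [set A :|: B; A :|: C; (T :&: A) :|: B :|: [set u]]].
Proof.
rewrite -card_setD_TT => tight.
have [X1 [X2 [w [u [X12 uX2 uw eH]]]]] := pair_covers_extremal outer_size_ge3 outer_neq0
  outer_uniform outer_intersecting outer_unpinned pairs_TT pairs_TT_cover tight.
have le32 : #|(X1 :\ w :|: [set u]) :&: X2| <= 1.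
  rewrite -(cards1 u); apply/subset_leq_card/subsetP => x.
  rewrite !inE => /andP[/orP[/andP[xw xX1] | //] xX2].
  by rewrite -in_set1 -X12 inE xX1 xX2 in xw.
have le12 : #|X1 :&: X2| <= 1 by rewrite X12 cards1.
have [T0 trace] := trace_constant eH le12 le32.
have [G GF] := set0Pn _ F'_neq0.
have T_H X : X \in H -> T :&: X = set0.
  by case/imsetP => G' _ ->; apply/setP => x; rewrite !inE; case: (x \in T).
have X1H : X1 \in H by rewrite eH !inE eqxx.
have X2H : X2 \in H by rewrite eH !inE eqxx orbT.
have T0_sub : T0 \subset T by rewrite -(trace G GF) subsetIl.
have cT0 : #|T0| = t.-1 by rewrite -(trace G GF) card_trace.
have T_X : [disjoint T & X1 :|: X2] by rewrite -setI_eq0 setIUr !T_H // setU0.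
have cX1 : #|X1| = (k - t).+1 by rewrite outer_uniform // addn1.
have cX2 : #|X2| = (k - t).+1 by rewrite outer_uniform // addn1.
have [A [B [C shape]]] := three_set_family_shape t_gt0 T0_sub cT0 T_X cX1 cX2 X12 uX2 uw.
by exists A, B, C, u; rewrite (F'_eq_imset trace) eH.
Qed.
End LargeTrace.
End Reduction.

Theorem proposition2p2 (n k t : nat) (F : {set {set 'I_n}}) (T : {set 'I_n}) :
  2 * k < n -> t + 3 <= k ->
  maximal_t_intersecting k t F ->
  tau_t t F = t + 2 ->
  #|T| = t ->
  (forall S, S \in TT_t t F -> T \subset S) ->
  #|TT_t t F| <= (k - t) * (k - t + 1) + 1 /\
  (#|TT_t t F| = (k - t) * (k - t + 1) + 1 ->
   exists (A B C : {set 'I_n}) (u : 'I_n),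
     [/\ [disjoint A & B], [disjoint A & C] & [disjoint B & C]] /\
     [/\ #|A| = t, #|B| = k - t, #|C| = k - t & #|T :&: A| = t.-1] /\
     [/\ T :&: (B :|: C) = set0, u \in C &
         F :\: fam_at F T =
           [set A :|: B; A :|: C; (T :&: A) :|: B :|: [set u]]]).
Proof.
move=> _ k_ge [F_uniform F_intersecting _] tau_F card_T T_sub_TT.
have -> : (k - t) * (k - t + 1) + 1 = (k - t + 1) * (k - t + 1 - 1) + 1.
  by rewrite addnK mulnC.
have [[G GF far] | trace_large] : (exists2 G, G \in F & #|T :&: G| + 2 <= t) \/
    (forall G, G \in F :\: fam_at F T -> t.-1 <= #|T :&: G|).
  case: (boolP [exists G in F, #|T :&: G| + 2 <= t]) => [/exists_inP | /exists_inPn near].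
    by left.
  right => G; rewrite inE => /andP[_ GF].
  by have := near G GF; rewrite -ltnNge; lia.
- have lt := card_TT_lt_far k_ge F_uniform tau_F card_T T_sub_TT GF far.
  split; first exact: ltnW.
  by move=> eq_TT; move: lt; rewrite eq_TT ltnn.
- split; [apply: (card_TT_le_trace_large (T := T)) | apply: TT_extremal_trace_large];
  assumption.
Qed.
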